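(* Let $n\ge 3$ and let $x_1<x_2<\dots<x_n$ be nodes with data values $f_1,\dots,f_n$. Set $h_i=x_{i+1}-x_i$, $m_i=(f_{i+1}-f_i)/h_i$ for $1\le i\le n-1$, and $\lambda_i=\frac{h_{i+1}}{h_i+h_{i+1}}$, $\mu_i=\frac{h_i}{h_i+h_{i+1}}$ for $1\le i\le n-2$. Let $P$ be the cubic spline defined as follows. Given boundary values $\dot f_1,\dot f_n\in\mathbb{R}$, the interior derivative values $\dot f_2,\dots,\dot f_{n-1}$ are the unique solution of the linear system $$\lambda_i\dot f_i+2\dot f_{i+1}+\mu_i\dot f_{i+2}=3(\lambda_i m_i+\mu_i m_{i+1}),\qquad i=1,\dots,n-2,$$ in which $\dot f_1$ and $\dot f_n$ are regarded as known. On each interval $[x_i,x_{i+1}]$, $1\le i\le n-1$, $P$ coincides with the cubic polynomial $$P_i(x)=f_i+\dot f_i(x-x_i)+\frac{m_i-\dot f_i}{h_i}(x-x_i)^2+\frac{\dot f_{i+1}+\dot f_i-2m_i}{h_i^2}(x-x_i)^2(x-x_{i+1}).$$ Let $\widetilde P$, with pieces $\widetilde P_i$, be the cubic spline constructed in exactly the same way from the same nodes and data values $f_i$, but with boundary values $\dot{\widetilde f}_1\neq\dot f_1$ and $\dot{\widetilde f}_n\neq\dot f_n$. Its interior derivative values $\dot{\widetilde f}_2,\dots,\dot{\widetilde f}_{n-1}$ are obtained by solving the same system with these boundary values. Then for every $i$ with $2\le i\le n-2$ and every $x\in[x_i,x_{i+1}]$, $$|P_i(x)-\widetilde P_i(x)|\le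 8h_i\left(2^{-i}\lambda_1|\dot{\widetilde f}_1-\dot f_1|+\mu_{n-2}2^{i-n}|\dot{\widetilde f}_n-\dot f_n|\right).$$
   Context: The polynomial $P_i$ is the cubic Hermite interpolant on $[x_i,x_{i+1}]$. It satisfies $P_i(x_i)=f_i$, $P_i(x_{i+1})=f_{i+1}$, $P_i'(x_i)=\dot f_i$ and $P_i'(x_{i+1})=\dot f_{i+1}$. The linear system is exactly the condition that the second derivatives of consecutive pieces agree at the interior nodes, so the spline is $C^2$. The coefficient matrix of the system is strictly diagonally dominant, so the system has a unique solution. *)

From HB Require Import structures.
From mathcomp Require Import all_boot all_order all_algebra.
Set Implicit Arguments. Unset Strict Implicit. Unset Printing Implicit Defensive.
Import Order.TTheory GRing.Theory Num.Theory.
Local Open Scope ring_scope.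

(* Indices are 1-based as in the paper; nodes x, data f and derivative
   values df are functions nat -> R (only indices 1..n matter). *)
Section Spline.
Variable R : realFieldType.
Variables (x f : nat -> R).

Definition h (i : nat) : R := x i.+1 - x i.
Definition slope (i : nat) : R := (f i.+1 - f i) / h i.
Definition lam (i : nat) : R := h i.+1 / (h i + h i.+1).
Definition mu (i : nat) : R := h i / (h i + h i.+1).

Definition spline_system (n : nat) (df : nat -> R) : Prop :=
  forall i : nat, (1 <= i <= n - 2)%N ->
    lam i * df i + 2 * df i.+1 + mu i * df i.+2 =
    3 * (lam i * slope i + mu i * slope i.+1).

Definition Ppiece (df : nat -> R) (i : nat) (t : R) : R :=
  f i + df i * (t - x i)
  + (slope i - df i) / h i * (t - x i) ^+ 2
  + (df i.+1 + df i - 2 * slope i) / (h i ^+ 2) * (t - x i) ^+ 2 * (t - x i.+1).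

End Spline.

(* The difference e = dft - df solves the spline system with zero right-hand
   side, 2 e_(j+1) = -(lam_j e_j + mu_j e_(j+2)) with lam_j + mu_j = 1, so |e| is
   a subsolution: 2 |e_(j+1)| <= lam_j |e_j| + mu_j |e_(j+2)|.  The barrier
   A 2^-j + B 2^j is a strict supersolution of the same inequality, and a
   discrete maximum principle for the ratio |e_j| / (A 2^-j + B 2^j), with the
   boundary terms lam_1 |e_1| and mu_(n-2) |e_n| absorbed into A and B, yields
   geometric decay of e away from both ends.  On [x_i, x_(i+1)] the two Hermite
   pieces differ by multiples of e_i and e_(i+1) with weights in [0, h_i]. *)

From HB Require Import structures.
From mathcomp Require Import all_boot all_order all_algebra.
From mathcomp Require Import ring lra zify.
Set Implicit Arguments. Unset Strict Implicit. Unset Printing Implicit Defensive.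
Import Order.TTheory GRing.Theory Num.Theory.
Local Open Scope ring_scope.

Lemma nat_interval_argmax {d} {T : orderType d} (F : nat -> T) (lo hi : nat) :
  (lo <= hi)%N ->
  exists2 k, (lo <= k <= hi)%N & forall j, (lo <= j <= hi)%N -> (F j <= F k)%O.
Proof.
move=> lo_hi; have lo_lt : (lo < hi.+1)%N by [].
have [k lo_k k_max] :=
  @arg_maxP _ _ 'I_hi.+1 (Ordinal lo_lt) (fun k => lo <= k)%N (F \o val) (leqnn lo).
exists k; first by rewrite lo_k -ltnS ltn_ord.
by move=> j /andP[lo_j j_hi]; exact: (k_max (Ordinal (j_hi : (j < hi.+1)%N))).
Qed.

Lemma ratio_max_principle (R : realFieldType) (v w : nat -> R) (lo hi : nat) :
  (lo <= hi)%N -> (forall j, (lo <= j <= hi)%N -> 0 < w j) ->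
  (forall M, 1 < M -> (forall j, (lo <= j <= hi)%N -> v j <= M * w j) ->
     forall k, (lo <= k <= hi)%N -> v k < M * w k) ->
  forall j, (lo <= j <= hi)%N -> v j <= w j.
Proof.
move=> lo_hi w_gt0 no_touch.
have [k k_in k_max] := nat_interval_argmax (fun j => v j / w j) lo_hi.
have v_le j : (lo <= j <= hi)%N -> v j <= v k / w k * w j.
  by move=> j_in; rewrite -ler_pdivrMr ?w_gt0 //; exact: k_max.
have [M_gt1 | M_le1] := ltrP 1 (v k / w k).
  by have := no_touch _ M_gt1 v_le k k_in; rewrite divfK ?gt_eqF ?w_gt0 // ltxx.
move=> j j_in; apply: le_trans (v_le j j_in) _.
by rewrite ler_piMl // ltW ?w_gt0.
Qed.

Definition barrier (R : realFieldType) (A B : R) (j : nat) : R := A / 2 ^+ j + B * 2 ^+ j.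

Lemma barrier_gt0 (R : realFieldType) (A B : R) j : 0 < A -> 0 < B -> 0 < barrier A B j.
Proof. by move=> A_gt0 B_gt0; rewrite addr_gt0 ?mulr_gt0 ?invr_gt0 ?exprn_gt0. Qed.

Lemma barrier_supersolution (R : realFieldType) (A B l m : R) (j : nat) :
  0 < A -> 0 < B -> 0 < l -> 0 < m -> l + m = 1 ->
  Num.max (l * barrier A B j) (3 / 2 * (A / 2 ^+ j.+1))
  + Num.max (m * barrier A B j.+2) (3 / 2 * (B * 2 ^+ j.+1))
  < 2 * barrier A B j.+1.
Proof.
move=> A_gt0 B_gt0 l_gt0 m_gt0 lm1.
have p_gt0 : (0 : R) < 2 ^+ j by rewrite exprn_gt0.
rewrite /barrier !exprS.
set a := A / (2 * 2 ^+ j); set b := B * (2 * 2 ^+ j).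
have a_gt0 : 0 < a by rewrite divr_gt0 ?mulr_gt0.
have b_gt0 : 0 < b by rewrite !mulr_gt0.
have -> : A / 2 ^+ j + B * 2 ^+ j = 2 * a + b / 2.
  by rewrite /a /b; field; rewrite gt_eqF.
have -> : A / (2 * (2 * 2 ^+ j)) + B * (2 * (2 * 2 ^+ j)) = a / 2 + 2 * b.
  by rewrite /a /b; field; rewrite gt_eqF.
by case: (leP (l * _) _); case: (leP (m * _) _); nra.
Qed.

Lemma barrier_pair_le (R : realFieldType) (a b : R) (n i : nat) :
  (i < n)%N -> 0 <= a -> 0 <= b ->
  barrier (8 / 3 * a) (4 / 3 * b / 2 ^+ n) i + barrier (8 / 3 * a) (4 / 3 * b / 2 ^+ n) i.+1
    <= 8 * ((2 ^+ i)^-1 * a + b * (2 ^+ (n - i))^-1).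
Proof.
move=> i_lt a_ge0 b_ge0.
set S := (2 ^+ i)^-1 * a + b * (2 ^+ (n - i))^-1.
have S_ge0 : 0 <= S by rewrite addr_ge0 ?mulr_ge0 ?invr_ge0 ?exprn_ge0.
have -> : barrier (8 / 3 * a) (4 / 3 * b / 2 ^+ n) i
          + barrier (8 / 3 * a) (4 / 3 * b / 2 ^+ n) i.+1 = 4 * S.
  by rewrite /S (expfB _ i_lt) /barrier exprS; field; rewrite !gt_eqF ?exprn_gt0.
by rewrite ler_wpM2r // ler_nat.
Qed.

Section TridiagonalDecay.
Variables (R : realFieldType) (n : nat) (lam mu e : nat -> R).
Hypothesis n_ge3 : (3 <= n)%N.
Hypothesis weights : forall j, (1 <= j <= n - 2)%N ->
  [/\ 0 < lam j, 0 < mu j & lam j + mu j = 1].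
Hypothesis recurrence : forall j, (1 <= j <= n - 2)%N ->
  lam j * e j + 2 * e j.+1 + mu j * e j.+2 = 0.
Hypotheses (e1_neq0 : e 1%N != 0) (en_neq0 : e n != 0).

Lemma norm_recurrence j : (1 <= j <= n - 2)%N ->
  2 * `|e j.+1| <= lam j * `|e j| + mu j * `|e j.+2|.
Proof.
move=> j_in; have [l_gt0 m_gt0 _] := weights j_in.
have E : 2 * e j.+1 = - (lam j * e j + mu j * e j.+2).
  by apply/eqP; rewrite -addr_eq0 addrCA addrA recurrence.
have := ler_normD (lam j * e j) (mu j * e j.+2).
by rewrite -normrN -E !normrM (gtr0_norm l_gt0) (gtr0_norm m_gt0) ger0_norm.
Qed.

(* Chosen so that lam_1 |e_1| = 3/2 * A / 2^2 and mu_(n-2) |e_n| = 3/2 * B 2^(n-1):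
   the boundary terms are then the second alternatives of the maxima in
   [barrier_supersolution]. *)
Let A := 8 / 3 * (lam 1%N * `|e 1%N|).
Let B := 4 / 3 * (mu (n - 2)%N * `|e n|) / 2 ^+ n.

Let A_gt0 : 0 < A.
Proof.
have [l1_gt0 _ _] := @weights 1%N ltac:(lia).
have src_gt0 : 0 < lam 1%N * `|e 1%N| by rewrite mulr_gt0 ?normr_gt0.
by rewrite /A; lra.
Qed.

Let B_gt0 : 0 < B.
Proof.
have [_ mn_gt0 _] := @weights (n - 2)%N ltac:(lia).
have src_gt0 : 0 < mu (n - 2)%N * `|e n| by rewrite mulr_gt0 ?normr_gt0.
by rewrite /B divr_gt0 ?exprn_gt0 //; lra.
Qed.

Lemma norm_lt_scaled_barrier M : 1 < M ->
    (forall k, (2 <= k <= n - 1)%N -> `|e k| <= M * barrier A B k) ->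
  forall j, (1 <= j <= n - 2)%N -> `|e j.+1| < M * barrier A B j.+1.
Proof.
move=> M_gt1 le_M j j_in; have M_gt0 := lt_trans ltr01 M_gt1.
have [l_gt0 m_gt0 lm1] := weights j_in.
have src_le (s t : R) : 0 <= s -> s <= M * Num.max t s.
  move=> s_ge0; apply: (@le_trans _ _ (M * s)); first by rewrite ler_peMl // ltW.
  by rewrite ler_pM2l // le_max lexx orbT.
have left : lam j * `|e j| <= M * Num.max (lam j * barrier A B j) (3 / 2 * (A / 2 ^+ j.+1)).
  have [-> | j_ne1] := eqVneq j 1%N.
    have -> : lam 1%N * `|e 1%N| = 3 / 2 * (A / 2 ^+ 2) by rewrite /A; field.
    by apply: src_le; rewrite mulr_ge0 ?divr_ge0 ?ler0n ?exprn_ge0 ?(ltW A_gt0).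
  apply: (@le_trans _ _ (lam j * (M * barrier A B j))).
    by rewrite ler_pM2l // le_M //; clear -j_in j_ne1; lia.
  by rewrite mulrCA ler_pM2l // le_max lexx.
have right : mu j * `|e j.+2| <= M * Num.max (mu j * barrier A B j.+2) (3 / 2 * (B * 2 ^+ j.+1)).
  have [jn | jn] := eqVneq j.+2 n.
    have -> : mu j * `|e j.+2| = 3 / 2 * (B * 2 ^+ j.+1).
      by rewrite /B -jn subSS subSS subn0 !exprS; field; rewrite gt_eqF ?exprn_gt0.
    by apply: src_le; rewrite mulr_ge0 ?divr_ge0 ?ler0n // mulr_ge0 ?exprn_ge0 ?(ltW B_gt0).
  apply: (@le_trans _ _ (mu j * (M * barrier A B j.+2))).
    by rewrite ler_pM2l // le_M //; clear -j_in jn n_ge3; lia.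
  by rewrite mulrCA ler_pM2l // le_max lexx.
rewrite -(ltr_pM2l (_ : 0 < 2)) // mulrCA.
apply: le_lt_trans (norm_recurrence j_in) _.
apply: le_lt_trans (lerD left right) _.
by rewrite -mulrDr ltr_pM2l ?barrier_supersolution.
Qed.

Lemma tridiag_decay i : (2 <= i <= n - 1)%N -> `|e i| <= barrier A B i.
Proof.
move=> i_in; apply: (ratio_max_principle (v := fun k => `|e k|) _ _ _ i_in).
- by clear -n_ge3; lia.
- by move=> k _; exact: barrier_gt0.
move=> M M_gt1 le_M [|j] // j_in.
by apply: norm_lt_scaled_barrier; last by clear -j_in; lia.
Qed.
End TridiagonalDecay.

Definition hermite_slope_weight (R : realFieldType) (hh u : R) : R :=
  u * (hh - u) ^+ 2 / hh ^+ 2.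

Lemma hermite_slope_weight_bound (R : realFieldType) (hh u : R) :
  0 < hh -> 0 <= u <= hh -> 0 <= hermite_slope_weight hh u <= hh.
Proof.
move=> hh_gt0 /andP[u_ge0 u_le]; have hu_ge0 : 0 <= hh - u by rewrite subr_ge0.
rewrite /hermite_slope_weight divr_ge0 ?sqr_ge0 ?mulr_ge0 ?sqr_ge0 //=.
rewrite ler_pdivrMr ?exprn_gt0 //.
have sq_le : (hh - u) ^+ 2 <= hh ^+ 2 by rewrite ler_sqr ?nnegrE ?(ltW hh_gt0) // gerBl.
exact: ler_pM (sqr_ge0 _) u_le sq_le.
Qed.

Section HermitePiece.
Variables (R : realFieldType) (x f df dft : nat -> R) (i : nat).
Hypothesis h_gt0 : 0 < h x i.

Lemma Ppiece_sub t :
  Ppiece x f df i t - Ppiece x f dft i t =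
  hermite_slope_weight (h x i) (t - x i) * (df i - dft i)
  - hermite_slope_weight (h x i) (x i.+1 - t) * (df i.+1 - dft i.+1).
Proof.
rewrite /Ppiece /slope /hermite_slope_weight.
have -> : x i.+1 = x i + h x i by rewrite /h addrC subrK.
move: (h x i) h_gt0 => hh hh_gt0.
by field; rewrite gt_eqF.
Qed.

Lemma Ppiece_sub_le t : x i <= t <= x i.+1 ->
  `|Ppiece x f df i t - Ppiece x f dft i t|
    <= h x i * (`|dft i - df i| + `|dft i.+1 - df i.+1|).
Proof.
move=> /andP[xi_le le_xi1].
have /andP[c1_ge0 c1_le] : 0 <= hermite_slope_weight (h x i) (t - x i) <= h x i.
  by apply: hermite_slope_weight_bound; rewrite // subr_ge0 xi_le lerD2r.
have /andP[c2_ge0 c2_le] : 0 <= hermite_slope_weight (h x i) (x i.+1 - t) <= h x i.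
  by apply: hermite_slope_weight_bound; rewrite // subr_ge0 le_xi1 lerD2l lerN2.
rewrite Ppiece_sub; apply: le_trans (ler_normB _ _) _.
rewrite normrM (ger0_norm c1_ge0) normrM (ger0_norm c2_ge0).
rewrite (distrC (df i)) (distrC (df i.+1)).
by rewrite mulrDr lerD // ler_wpM2r.
Qed.

End HermitePiece.

Lemma lam_mu_weights (R : realFieldType) (x : nat -> R) j :
  0 < h x j -> 0 < h x j.+1 -> [/\ 0 < lam x j, 0 < mu x j & lam x j + mu x j = 1].
Proof.
move=> h_gt0 h1_gt0; have hs_gt0 : 0 < h x j + h x j.+1 by rewrite addr_gt0.
rewrite /lam /mu !divr_gt0 //; split=> //.
by rewrite -mulrDl addrC divff ?gt_eqF.
Qed.

Lemma spline_system_sub (R : realFieldType) (x f : nat -> R) n df dft :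
  spline_system x f n df -> spline_system x f n dft ->
  forall j, (1 <= j <= n - 2)%N ->
    lam x j * (dft j - df j) + 2 * (dft j.+1 - df j.+1) + mu x j * (dft j.+2 - df j.+2) = 0.
Proof.
move=> sys_df sys_dft j j_in.
rewrite -(subrr (3 * (lam x j * slope x f j + mu x j * slope x f j.+1))).
by rewrite -{1}(sys_dft j j_in) -(sys_df j j_in); ring.
Qed.

Theorem proposition1 (R : realFieldType) (n : nat) (x f df dft : nat -> R) :
  (3 <= n)%N ->
  (forall i : nat, (1 <= i < n)%N -> x i < x i.+1) ->
  spline_system x f n df ->
  spline_system x f n dft ->
  dft 1%N != df 1%N ->
  dft n != df n ->
  forall (i : nat) (t : R), (2 <= i <= n - 2)%N ->
    x i <= t <= x i.+1 ->
    `|Ppiece x f df i t - Ppiece x f dft i t|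
      <= 8 * h x i * ((2 ^+ i)^-1 * lam x 1 * `|dft 1%N - df 1%N|
                      + mu x (n - 2) * (2 ^+ (n - i))^-1 * `|dft n - df n|).
Proof.
move=> n_ge3 x_incr sys_df sys_dft e1_neq0 en_neq0 i t i_in t_in.
have h_gt0 j : (1 <= j < n)%N -> 0 < h x j by move=> j_in; rewrite subr_gt0 x_incr.
have weights j : (1 <= j <= n - 2)%N -> [/\ 0 < lam x j, 0 < mu x j & lam x j + mu x j = 1].
  by move=> j_in; apply: lam_mu_weights; apply: h_gt0; clear -j_in; lia.
have [l1_gt0 _ _] := weights 1%N ltac:(clear -n_ge3; lia).
have [_ mn_gt0 _] := weights (n - 2)%N ltac:(clear -n_ge3; lia).
rewrite -subr_eq0 in e1_neq0; rewrite -subr_eq0 in en_neq0.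
have decay := tridiag_decay n_ge3 weights (spline_system_sub sys_df sys_dft) e1_neq0 en_neq0.
have hi_gt0 : 0 < h x i by apply: h_gt0; clear -i_in; lia.
apply: le_trans (Ppiece_sub_le _ _ _ hi_gt0 t_in) _.
rewrite -[8 * h x i * _]mulrA mulrCA ler_pM2l //.
apply: le_trans (lerD (decay i ltac:(clear -i_in; lia)) (decay i.+1 ltac:(clear -i_in; lia))) _.
have -> : (2 ^+ i)^-1 * lam x 1 * `|dft 1%N - df 1%N| + mu x (n - 2) * (2 ^+ (n - i))^-1 * `|dft n - df n|
  = (2 ^+ i)^-1 * (lam x 1 * `|dft 1%N - df 1%N|) + (mu x (n - 2) * `|dft n - df n|) * (2 ^+ (n - i))^-1.
  by ring.
apply: barrier_pair_le; first by clear -i_in; lia.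
  exact: mulr_ge0 (ltW l1_gt0) (normr_ge0 _).
exact: mulr_ge0 (ltW mn_gt0) (normr_ge0 _).
Qed.
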